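(* In the setup below: (i) $G'$ has $p$-rank $d_p G'=s$, and $G'_{[2]}=(G')^p[G',G']$, so $(G')^{p,el}\simeq G'/G'_{[2]}$; (ii) for every $n\geq 1$, $G'_{[n]}$ is normal in $G'$, the quotient $G'_{[n]}/G'_{[n+1]}$ is an elementary abelian $p$-group, and $G'$ acts trivially by conjugation on $G'_{[n]}/G'_{[n+1]}$; (iii) each $G'_{[n]}$ is open in $G'$ and $\bigcap_n G'_{[n]}=\{1\}$.
   Context: $p$ is an odd prime; $GL_m^1=\{A\in GL_m(\mathbb Z_p): A\equiv 1\bmod p\}$. A pro-$p$ group $G$ is uniform if it is finitely generated, powerful, and with $G_1=G$, $G_{n+1}=G_n^p[G,G_n]$, the $p$-power maps $G_n/G_{n+1}\to G_{n+1}/G_{n+2}$ are isomorphisms. Let $G\subset GL_m^1$ be a closed uniform subgroup, fix $k\geq1$ and $g_1,\dots,g_s\in G_k$ whose images in $G_k/G_{k+1}$ are $\mathbb F_p$-linearly independent, let $G'$ be the closed subgroup generated by the $g_i$, and put $G'_{[n]}=G'\cap G_{n+k-1}$. For a pro-$p$ group $H$, $d_pH=\dim_{\mathbb F_p}H/H^p[H,H]$ and $H^{p,el}=H/H^p[H,H]$. *)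

(* GL_m(Z_p) is modelled as the inverse limit of the finite
   groups GL_m(Z/p^(n+1)Z): an element is a compatible family of matrices
   x n : 'M['Z_(p^(n+1))]_m  (level n = reduction mod p^(n+1)).
   The p-adic (profinite) topology is the one given by these levels. *)
From HB Require Import structures.
From mathcomp Require Import all_boot all_order all_algebra.
Set Implicit Arguments. Unset Strict Implicit. Unset Printing Implicit Defensive.
Import GRing.Theory.
Local Open Scope ring_scope.

Section PadicMatrixGroups.
Variables (p m : nat).

Definition fam := forall n : nat, 'M['Z_(p ^ n.+1)]_m.

Definition red (n : nat) (A : 'M['Z_(p ^ n.+2)]_m) : 'M['Z_(p ^ n.+1)]_m :=
  map_mx (fun a : 'Z_(p ^ n.+2) => (inZp (nat_of_ord a) : 'Z_(p ^ n.+1))) A.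

(* elements of GL_m(Z_p) congruent to 1 mod p *)
Definition compatible (x : fam) : Prop := forall n, red (x n.+1) = x n.
Definition GL1 (x : fam) : Prop := compatible x /\ x 0%N = 1%:M.

Definition famM (x y : fam) : fam := fun n => x n *m y n.
Definition famV (x : fam) : fam := fun n => invmx (x n).
Definition fam1 : fam := fun n => 1%:M.
Definition famX (x : fam) (k : nat) : fam := fun n => iter k (fun z => x n *m z) 1%:M.
Definition famC (x y : fam) : fam := famM (famM (famV x) (famV y)) (famM x y).
Definition famprod (l : seq fam) : fam := foldr famM fam1 l.

Definition fset := fam -> Prop.
Definition subs (A B : fset) : Prop := forall x, A x -> B x.
Definition seteq (A B : fset) : Prop := forall x, A x <-> B x.
Definition fsetI (A B : fset) : fset := fun x => A x /\ B x.
Definition fsetU (A B : fset) : fset := fun x => A x \/ B x.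

Definition subgroup (H : fset) : Prop :=
  subs H GL1 /\ H fam1 /\ (forall x y, H x -> H y -> H (famM x y)) /\
  (forall x, H x -> H (famV x)).

(* topological pclosure in GL_m^1 (p-adic topology) *)
Definition pclosure (S : fset) : fset :=
  fun x => GL1 x /\ forall n, exists y, S y /\ y n = x n.
Definition pclosed (S : fset) : Prop := seteq (pclosure S) S.

Definition gen (S : fset) : fset :=
  fun x => forall H, subgroup H -> subs S H -> H x.
Definition cgen (S : fset) : fset := pclosure (gen (fsetI S GL1)).

(* open subgroup H of the subgroup K: contains a congruence neighbourhood *)
Definition open_in (H K : fset) : Prop :=
  exists N, forall x, K x -> x N = 1%:M -> H x.

Definition normal_in (H K : fset) : Prop :=
  forall x y, K x -> H y -> H (famM (famM (famV x) y) x).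

Definition pw (H : fset) : fset := fun y => exists x, H x /\ y = famX x p.
Definition comm (H K : fset) : fset :=
  fun y => exists x z, H x /\ K z /\ y = famC x z.

Definition pcomm (K H : fset) : fset := cgen (fsetU (pw H) (comm K H)).

(* lower p-series: pser G n = G_(n+1); G_1 = G, G_(n+1) = G_n^p [G, G_n] *)
Fixpoint pser (G : fset) (n : nat) : fset :=
  if n is n'.+1 then pcomm G (pser G n') else G.
(* G_n for n >= 1 *)
Definition Gn (G : fset) (n : nat) : fset := pser G n.-1.

Definition topfingen (G : fset) : Prop :=
  exists r (f : 'I_r -> fam), seteq G (cgen (fun x => exists i, x = f i)).

(* powerful, p odd: [G,G] <= G^p (pclosed subgroups) *)
Definition powerful (G : fset) : Prop :=
  subs (cgen (comm G G)) (cgen (pw G)).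

Definition congr (N : fset) (x y : fam) : Prop := N (famM (famV y) x).

(* the p-power map G_n/G_(n+1) -> G_(n+1)/G_(n+2) is a well defined group
   isomorphism *)
Definition ppow_iso (G : fset) (n : nat) : Prop :=
  let A := Gn G n in let B := Gn G n.+1 in let C := Gn G n.+2 in
  (forall x, A x -> B (famX x p)) /\
  (forall x y, A x -> A y -> congr B x y -> congr C (famX x p) (famX y p)) /\
  (forall x y, A x -> A y ->
     congr C (famX (famM x y) p) (famM (famX x p) (famX y p))) /\
  (forall x y, A x -> A y -> congr C (famX x p) (famX y p) -> congr B x y) /\
  (forall z, B z -> exists x, A x /\ congr C (famX x p) z).

Definition uniform (G : fset) : Prop :=
  topfingen G /\ powerful G /\ forall n, (1 <= n)%N -> ppow_iso G n.

Definition lincomb (s : nat) (g : 'I_s -> fam) (e : 'I_s -> nat) : fam :=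
  famprod [seq famX (g i) (e i) | i <- enum 'I_s].

(* images of g_i in A/N are F_p-linearly independent *)
Definition lin_indep (A N : fset) (s : nat) (g : 'I_s -> fam) : Prop :=
  forall e : 'I_s -> nat, (forall i, (e i < p)%N) ->
    N (lincomb g e) -> forall i, e i = 0%N.

(* images of g_i span A/N *)
Definition spans (A N : fset) (s : nat) (g : 'I_s -> fam) : Prop :=
  forall x, A x -> exists e : 'I_s -> nat, congr N x (lincomb g e).

(* Frattini-type subgroup H^p [H,H] and H^{p,el} = H / H^p[H,H] *)
Definition Phi (H : fset) : fset := pcomm H H.

(* d_p H = s : H^{p,el} has an F_p-basis of size s *)
Definition dp_eq (H : fset) (s : nat) : Prop :=
  exists h : 'I_s -> fam, (forall i, H (h i)) /\
    lin_indep H (Phi H) h /\ spans H (Phi H) h.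

End PadicMatrixGroups.

(* The general results are then:
   - the lower p-series of a closed subgroup consists of closed normal
     subgroups with G_j^p [G, G_j] <= G_(j+1) (pcomm_closed_normal);
   - if N is closed normal in a closed group K topologically generated by
     f_1, ..., f_r and K^p [K,K] <= N, every element of K is congruent modulo
     N to a product f_1^e_1 ... f_r^e_r with e_i < p (cgen_span); the proof
     shows that such elements form a subgroup which is closed, being a finite
     union of closed cosets;
   - G_(j+1) consists of elements congruent to 1 modulo p^(j+1) (pser_Kt);
   - closed subgroups of finite index are open, and for uniform G the p-power
     map shows inductively that every G_j has finite index (pser_open).
   Statement (i) follows from cgen_span applied to G' and its Frattini
   subgroup together with the linear independence of the g_i, (ii) from the
   properties of the p-series, and (iii) from pser_open and pser_Kt. *)
From HB Require Import structures.
From mathcomp Require Import all_boot all_order all_algebra.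
From Stdlib Require Import FunctionalExtensionality Classical ClassicalEpsilon.
Set Implicit Arguments. Unset Strict Implicit. Unset Printing Implicit Defensive.
Import GRing.Theory.
Local Open Scope ring_scope.

Definition rZ (a b : nat) (x : 'Z_a) : 'Z_b := inZp (nat_of_ord x).

Section Reduction.
Variables (a b : nat).
Hypotheses (a_gt1 : (1 < a)%N) (b_gt1 : (1 < b)%N) (b_dvd_a : (b %| a)%N).

Lemma rZE (x : 'Z_a) : rZ b x = (nat_of_ord x)%:R.
Proof. by rewrite /rZ Zp_nat. Qed.

Lemma rZ_natr (u : nat) : rZ b (u%:R : 'Z_a) = u%:R.
Proof.
by rewrite rZE val_Zp_nat // -(Zp_nat_mod b_gt1) modn_dvdm // Zp_nat_mod.
Qed.

Lemma rZ_nmod : nmod_morphism (@rZ a b).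
Proof.
split; first exact: (rZ_natr 0).
by move=> x y; rewrite -[x]natr_Zp -[y]natr_Zp -natrD !rZ_natr natrD.
Qed.

Lemma rZ_monoid : monoid_morphism (@rZ a b).
Proof.
split; first exact: (rZ_natr 1).
by move=> x y; rewrite -[x]natr_Zp -[y]natr_Zp -natrM !rZ_natr natrM.
Qed.

HB.instance Definition _ := GRing.isNmodMorphism.Build _ _ (@rZ a b) rZ_nmod.
HB.instance Definition _ := GRing.isMonoidMorphism.Build _ _ (@rZ a b) rZ_monoid.

Lemma map_rZM k l q (A : 'M['Z_a]_(k, l)) (B : 'M['Z_a]_(l, q)) :
  map_mx (rZ b) (A *m B) = map_mx (rZ b) A *m map_mx (rZ b) B.
Proof. exact: map_mxM. Qed.
Lemma map_rZ1 k : map_mx (rZ b) (1%:M : 'M['Z_a]_k) = 1%:M.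
Proof. exact: map_mx1. Qed.
Lemma map_rZB k l (A B : 'M['Z_a]_(k, l)) :
  map_mx (rZ b) (A - B) = map_mx (rZ b) A - map_mx (rZ b) B.
Proof. exact: map_mxB. Qed.
Lemma det_map_rZ k (A : 'M['Z_a]_k) : \det (map_mx (rZ b) A) = rZ b (\det A).
Proof. exact: det_map_mx. Qed.

End Reduction.

Lemma rZ_comp a b c (z : 'Z_a) : (1 < b)%N -> (1 < c)%N -> (c %| b)%N ->
  rZ c (rZ b z) = rZ c z.
Proof. by move=> b_gt1 c_gt1 cb; rewrite [rZ b z]rZE // rZ_natr // rZE. Qed.

Lemma rZ_id a (z : 'Z_a) : rZ a z = z.
Proof. by rewrite /rZ -Zp_nat natr_Zp. Qed.

Lemma natr_Zp_eq1 b v : (1 < b)%N -> (v%:R : 'Z_b) = 1 -> coprime b v.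
Proof.
move=> b_gt1 /(congr1 (@nat_of_ord _)).
rewrite -[1 in RHS]/(1%:R : 'Z_b) !val_Zp_nat // (modn_small b_gt1).
by rewrite -coprime_modr => ->; rewrite coprimen1.
Qed.

Lemma natr_Zp_eq0 b (z : nat) : (1 < b)%N -> ((z%:R : 'Z_b) = 0) <-> (b %| z)%N.
Proof.
move=> b_gt1; rewrite /dvdn -(val_Zp_nat b_gt1).
by split => [-> // | /eqP e]; apply: val_inj; rewrite /= e.
Qed.

Lemma invmx_uniq (R : comUnitRingType) k (A B : 'M[R]_k) :
  A *m B = 1%:M -> invmx A = B.
Proof.
move=> AB1; have [uA _] := mulmx1_unit AB1.
by rewrite -[invmx A]mulmx1 -AB1 mulmxA mulVmx // mul1mx.
Qed.

Lemma invmxM (R : comUnitRingType) k (A B : 'M[R]_k) :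
  A \in unitmx -> B \in unitmx -> invmx (A *m B) = invmx B *m invmx A.
Proof.
move=> uA uB; apply: invmx_uniq.
by rewrite mulmxA -(mulmxA A) mulmxV // mulmx1 mulmxV.
Qed.

Section FamilyGroup.
Variables (p m : nat).
Local Notation fam := (fam p m).
Local Notation fam1 := (fam1 p m).

Ltac fext := let n := fresh "n" in apply: functional_extensionality_dep => n.

Definition U (x : fam) := forall n, x n \in unitmx.
Definition conj (c y : fam) : fam := famM (famM (famV c) y) c.

Lemma famMA (x y z : fam) : famM (famM x y) z = famM x (famM y z).
Proof. by fext; rewrite /famM mulmxA. Qed.
Lemma famM1x (x : fam) : famM fam1 x = x.
Proof. by fext; rewrite /famM /fam1 mul1mx. Qed.
Lemma famMx1 (x : fam) : famM x fam1 = x.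
Proof. by fext; rewrite /famM /fam1 mulmx1. Qed.
Lemma famMVx (x : fam) : U x -> famM (famV x) x = fam1.
Proof. by move=> ux; fext; rewrite /famM /famV mulVmx ?ux. Qed.
Lemma famMxV (x : fam) : U x -> famM x (famV x) = fam1.
Proof. by move=> ux; fext; rewrite /famM /famV mulmxV ?ux. Qed.
Lemma famVK (x : fam) : famV (famV x) = x.
Proof. by fext; rewrite /famV invmxK. Qed.
Lemma famV1 : famV fam1 = fam1.
Proof. by fext; rewrite /famV /fam1 invmx1. Qed.
Lemma famVM (x y : fam) : U x -> U y -> famV (famM x y) = famM (famV y) (famV x).
Proof. by move=> ux uy; fext; rewrite /famV /famM invmxM ?ux ?uy. Qed.

Lemma U1 : U fam1.
Proof. by move=> n; rewrite /fam1 unitmx1. Qed.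
Lemma UM x y : U x -> U y -> U (famM x y).
Proof. by move=> ux uy n; rewrite /famM unitmx_mul ux uy. Qed.
Lemma UV x : U x -> U (famV x).
Proof. by move=> ux n; rewrite /famV unitmx_inv ux. Qed.
Lemma UX x k : U x -> U (famX x k).
Proof. by move=> ux; elim: k => [|k IH]; [exact: U1 | exact: UM]. Qed.

Lemma famXS (x : fam) k : famX x k.+1 = famM x (famX x k).
Proof. by []. Qed.
Lemma famX1 (x : fam) : famX x 1 = x.
Proof. by rewrite famXS famMx1. Qed.
Lemma famXD (x : fam) a b : famX x (a + b) = famM (famX x a) (famX x b).
Proof.
elim: a => [|a IH]; first by rewrite famM1x.
by rewrite addSn !famXS IH famMA.
Qed.
Lemma famXM (x : fam) a b : famX x (a * b) = famX (famX x a) b.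
Proof.
elim: b => [|b IH]; first by rewrite muln0.
by rewrite mulnS famXD IH famXS.
Qed.

Lemma conjM c x y : U c -> conj c (famM x y) = famM (conj c x) (conj c y).
Proof. by move=> uc; rewrite /conj !famMA -(famMA c) famMxV // famM1x. Qed.
Lemma conj1 c : U c -> conj c fam1 = fam1.
Proof. by move=> uc; rewrite /conj famMx1 famMVx. Qed.
Lemma conjV c x : U c -> U x -> conj c (famV x) = famV (conj c x).
Proof.
move=> uc ux; have uVc := UV uc.
by rewrite /conj (famVM (UM uVc ux) uc) (famVM uVc ux) famVK famMA.
Qed.
Lemma conjX c x k : U c -> conj c (famX x k) = famX (conj c x) k.
Proof.
move=> uc; elim: k => [|k IH]; first exact: conj1.
by rewrite !famXS conjM // IH.
Qed.
Lemma conjR c x y : U c -> U x -> U y ->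
  conj c (famC x y) = famC (conj c x) (conj c y).
Proof. by move=> uc ux uy; rewrite /famC !conjM ?UM ?UV // !conjV. Qed.

Lemma famVC x y : U x -> U y -> famV (famC x y) = famC y x.
Proof.
move=> ux uy; have uVx := UV ux; have uVy := UV uy.
rewrite /famC (famVM (UM uVx uVy) (UM ux uy)) (famVM ux uy) (famVM uVx uVy).
by rewrite !famVK.
Qed.
Lemma famC_conj x z : famC x z = famM (conj x (famV z)) z.
Proof. by rewrite /famC /conj !famMA. Qed.
End FamilyGroup.

Section Levels.
Variables (p m : nat).
Hypothesis p_gt1 : (1 < p)%N.
Local Notation fam := (fam p m).
Local Notation fam1 := (fam1 p m).
Local Notation U := (@U p m).
Local Notation GL1 := (@GL1 p m).

Lemma pX_gt1 u : (1 < p ^ u.+1)%N.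
Proof. by rewrite -[1%N](exp1n u.+1) ltn_exp2r. Qed.

Lemma pX_dvd u n : (u <= n)%N -> (p ^ u %| p ^ n)%N.
Proof. by move=> le_un; rewrite dvdn_exp2l. Qed.

Lemma redM n (A B : 'M['Z_(p ^ n.+2)]_m) : red (A *m B) = red A *m red B.
Proof. exact: (map_rZM (pX_gt1 _) (pX_gt1 _) (pX_dvd (leqnSn _))). Qed.
Lemma red1 n : red (1%:M : 'M['Z_(p ^ n.+2)]_m) = 1%:M.
Proof. exact: (map_rZ1 (pX_gt1 _) (pX_gt1 _) (pX_dvd (leqnSn _))). Qed.
Lemma redV n (A : 'M['Z_(p ^ n.+2)]_m) :
  A \in unitmx -> red (invmx A) = invmx (red A).
Proof. by move=> uA; symmetry; apply: invmx_uniq; rewrite -redM mulmxV // red1. Qed.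

Lemma red_level0 (x : fam) : compatible x -> forall n,
  map_mx (rZ (p ^ 1)) (x n) = x 0%N.
Proof.
move=> cx; elim => [|n IH].
  by apply/matrixP => i j; rewrite mxE rZ_id.
rewrite -IH -(cx n) -map_mx_comp; apply/matrixP => i j.
by rewrite !mxE /= rZ_comp ?pX_gt1 ?pX_dvd.
Qed.

(* Elements of GL_m^1 are invertible at every level: their determinant is
   1 modulo p, hence a unit modulo p^(n+1). *)
Lemma GL1_U (x : fam) : GL1 x -> U x.
Proof.
move=> [cx x0] n.
have det1p : rZ (p ^ 1) (\det (x n)) = 1.
  by rewrite -det_map_rZ ?pX_gt1 ?pX_dvd // red_level0 // x0 det1.
rewrite unitmxE -[\det (x n)]natr_Zp unitZpE ?pX_gt1 // coprime_pexpl //.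
by move: det1p; rewrite rZE expn1 => /natr_Zp_eq1; apply.
Qed.

Lemma GL1_1 : GL1 fam1.
Proof. by split => // n; rewrite /fam1 red1. Qed.
Lemma GL1_M x y : GL1 x -> GL1 y -> GL1 (famM x y).
Proof.
move=> [cx x0] [cy y0]; split; last by rewrite /famM x0 y0 mulmx1.
by move=> n; rewrite /famM redM cx cy.
Qed.
Lemma GL1_V x : GL1 x -> GL1 (famV x).
Proof.
move=> gx; have ux := GL1_U gx; case: gx => cx x0; split.
  by move=> n; rewrite /famV redV // cx.
by rewrite /famV x0 invmx1.
Qed.
Lemma GL1_X x k : GL1 x -> GL1 (famX x k).
Proof. by move=> gx; elim: k => [|k IH]; [exact: GL1_1 | exact: GL1_M]. Qed.
Lemma GL1_conj c y : GL1 c -> GL1 y -> GL1 (conj c y).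
Proof. by move=> gc gy; apply: GL1_M => //; apply: GL1_M => //; apply: GL1_V. Qed.
Lemma GL1_C x y : GL1 x -> GL1 y -> GL1 (famC x y).
Proof. by move=> gx gy; apply: GL1_M; apply: GL1_M => //; apply: GL1_V. Qed.

Lemma agree_down x y N N' : GL1 x -> GL1 y -> x N = y N -> (N' <= N)%N ->
  x N' = y N'.
Proof.
move=> [cx _] [cy _] + /subnK le; rewrite -le; elim: (N - N')%N => [|d IH] // xyN.
by apply: IH; rewrite -cx -cy; exact: (congr1 (@red _ _ _) xyN).
Qed.
End Levels.

Section Subgroups.
Variables (p m : nat).
Hypothesis p_gt1 : (1 < p)%N.
Local Notation fam := (fam p m).
Local Notation fam1 := (fam1 p m).
Local Notation U := (@U p m).
Local Notation GL1 := (@GL1 p m).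
Local Notation fset := (fset p m).
Local Notation subgroup := (@subgroup p m).
Local Notation pclosure := (@pclosure p m).
Local Notation gen := (@gen p m).
Local Notation cgen := (@cgen p m).
Local Notation subs := (@subs p m).
Local Notation congr := (@congr p m).

Section Closure.
Variable H : fset.
Hypothesis sgH : subgroup H.

Lemma sg_GL1 x : H x -> GL1 x. Proof. by case: sgH => sH _; apply: sH. Qed.
Lemma sg_U x : H x -> U x. Proof. by move/sg_GL1/GL1_U; apply. Qed.
Lemma sg_1 : H fam1. Proof. by case: sgH => _ []. Qed.
Lemma sg_M x y : H x -> H y -> H (famM x y).
Proof. by case: sgH => _ [_ []] HM _; apply: HM. Qed.
Lemma sg_V x : H x -> H (famV x). Proof. by case: sgH => _ [_ []] _ HV; apply: HV. Qed.
Lemma sg_X x k : H x -> H (famX x k).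
Proof. by move=> Hx; elim: k => [|k IH]; [exact: sg_1 | exact: sg_M]. Qed.
Lemma sg_conj c y : H c -> H y -> H (conj c y).
Proof. by move=> Hc Hy; do 2 (apply: sg_M => //); apply: sg_V. Qed.
Lemma sg_C x y : H x -> H y -> H (famC x y).
Proof. by move=> Hx Hy; do 2 apply: sg_M => //; apply: sg_V. Qed.

Lemma pclosure_sg : subgroup (pclosure H).
Proof.
split; first by move=> x [].
split; first by split; [exact: GL1_1 | move=> n; exists fam1; split => //; exact: sg_1].
split.
  move=> x y [gx approx_x] [gy approx_y]; split; first exact: GL1_M.
  move=> n; have [x' [Hx' x'x]] := approx_x n; have [y' [Hy' y'y]] := approx_y n.
  by exists (famM x' y'); split; [exact: sg_M | rewrite /famM x'x y'y].
move=> x [gx approx_x]; split; first exact: GL1_V.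
move=> n; have [x' [Hx' x'x]] := approx_x n.
by exists (famV x'); split; [exact: sg_V | rewrite /famV x'x].
Qed.
End Closure.

Lemma sg_GL1set : subgroup GL1.
Proof. by split => //; split; [exact: GL1_1 | split; [exact: GL1_M | exact: GL1_V]]. Qed.

Lemma pclosure_mono S T : subs S T -> subs (pclosure S) (pclosure T).
Proof.
move=> ST x [gx approx]; split => // n; have [y [Sy yx]] := approx n.
by exists y; split => //; apply: ST.
Qed.
Lemma pclosure_idem S : subs (pclosure (pclosure S)) (pclosure S).
Proof.
move=> x [gx approx]; split => // n; have [y [[_ approx_y] <-]] := approx n.
exact: approx_y.
Qed.

Lemma gen_sg S : subs S GL1 -> subgroup (gen S).
Proof.
move=> SG1; split; first by move=> x; apply; [exact: sg_GL1set |].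
split; first by move=> H sgH _; apply: sg_1.
split; first by move=> x y Sx Sy H sgH SH; apply: sg_M => //; [apply: Sx | apply: Sy].
by move=> x Sx H sgH SH; apply: sg_V => //; apply: Sx.
Qed.
Lemma gen_min S H : subgroup H -> subs S H -> subs (gen S) H.
Proof. by move=> sgH SH x; apply. Qed.

Lemma cgen_sg S : subgroup (cgen S).
Proof. by apply: pclosure_sg; apply: gen_sg => x []. Qed.
Lemma cgen_closed S : subs (pclosure (cgen S)) (cgen S).
Proof. exact: pclosure_idem. Qed.
Lemma cgen_ext S x : S x -> GL1 x -> cgen S x.
Proof. by move=> Sx gx; split => // n; exists x; split => // H _; apply. Qed.
Lemma cgen_min S K : subgroup K -> subs (pclosure K) K ->
  subs (fsetI S GL1) K -> subs (cgen S) K.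
Proof. by move=> sgK Kcl SK x cx; apply: Kcl; apply: pclosure_mono cx; exact: gen_min. Qed.

Lemma cgen_normal (K S : fset) : subgroup K ->
  (forall c y, K c -> S y -> GL1 y -> S (conj c y)) ->
  forall c y, K c -> cgen S y -> cgen S (conj c y).
Proof.
move=> sgK Sconj c y Kc.
have gc := sg_GL1 sgK Kc; have uc := GL1_U p_gt1 gc.
have sgS : subgroup (gen (fsetI S GL1)) by apply: gen_sg => x [].
pose H := fun y => GL1 y /\ gen (fsetI S GL1) (conj c y).
have sgH : subgroup H.
  split; first by move=> x [].
  split; first by split; [exact: GL1_1 | rewrite conj1 //; exact: (sg_1 sgS)].
  split.
    move=> a b [ga Ha] [gb Hb]; split; first exact: GL1_M.
    by rewrite conjM //; apply: (sg_M sgS).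
  move=> a [ga Ha]; split; first exact: GL1_V.
  by rewrite (conjV uc (GL1_U p_gt1 ga)); apply: (sg_V sgS).
have genH : subs (gen (fsetI S GL1)) H.
  apply: gen_min => // a [Sa ga]; split => //.
  by move=> H' _ SH'; apply: SH'; split; [apply: Sconj | apply: GL1_conj].
move=> [gy approx]; split; first exact: GL1_conj.
move=> n; have [y' [gen_y' y'y]] := approx n.
by exists (conj c y'); split; [case: (genH _ gen_y') | rewrite /conj /famM /famV y'y].
Qed.

(* A finite union of closed sets is closed: a point approximated at every
   level by the union is approximated at every level by one fixed member,
   because agreement at a level implies agreement at all lower levels. *)
Lemma pclosure_fin_union (I : finType) (A : I -> fset) :
  (forall i, subs (A i) GL1) -> (forall i, subs (pclosure (A i)) (A i)) ->
  subs (pclosure (fun x => exists i, A i x)) (fun x => exists i, A i x).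
Proof.
move=> AG1 Acl x [gx approx].
pose near i n := exists y, A i y /\ y n = x n.
have near_down i n n' : (n' <= n)%N -> near i n -> near i n'.
  move=> le [y [Ay yx]]; exists y; split => //.
  exact: (agree_down (AG1 _ _ Ay) gx yx le).
apply: NNPP => no_i.
have /fin_all_exists [bad badP] : forall i, exists n, ~ near i n.
  move=> i; apply: NNPP => all_n; apply: no_i; exists i; apply: Acl.
  by split => // n; apply: NNPP => not_n; apply: all_n; exists n.
have [y [[i Ay] yx]] := approx (\max_i bad i).
by apply: (badP i); apply: (near_down i (\max_i bad i)); [exact: leq_bigmax | exists y].
Qed.

Definition coset (H N : fset) (c : fam) : fset := fun x => H x /\ congr N x c.

Lemma coset_closed H N c : subs (pclosure H) H -> subs (pclosure N) N -> GL1 c ->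
  subs (pclosure (coset H N c)) (coset H N c).
Proof.
move=> Hcl Ncl gc x [gx approx]; split.
  apply: Hcl; split => // n; have [y [[Hy _] yx]] := approx n; by exists y.
apply: Ncl; split; first by apply: GL1_M => //; apply: GL1_V.
move=> n; have [y [[_ Ny] yx]] := approx n.
by exists (famM (famV c) y); split => //; rewrite /famM /famV yx.
Qed.
End Subgroups.

Section PSeries.
Variables (p m : nat).
Hypothesis p_gt1 : (1 < p)%N.
Local Notation GL1 := (@GL1 p m).
Local Notation fset := (fset p m).
Local Notation subgroup := (@subgroup p m).
Local Notation pclosure := (@pclosure p m).
Local Notation subs := (@subs p m).
Local Notation pw := (@pw p m).
Local Notation comm := (@comm p m).
Local Notation pcomm := (@pcomm p m).
Local Notation normal_in := (@normal_in p m).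

Definition closed_normal (K H : fset) :=
  [/\ subgroup H, subs (pclosure H) H, subs H K & normal_in H K].

Lemma pcomm_closed_normal K H : subgroup K -> closed_normal K H ->
  [/\ closed_normal K (pcomm K H), subs (pcomm K H) H,
      subs (pw H) (pcomm K H) & subs (comm K H) (pcomm K H)].
Proof.
move=> sgK [sgH Hcl HK nH].
have gK := sg_GL1 sgK; have uK := sg_U p_gt1 sgK.
have gH := sg_GL1 sgH; have uH := sg_U p_gt1 sgH.
have gensG1 : subs (fsetU (pw H) (comm K H)) GL1.
  move=> y [[x [Hx ->]] | [x [z [Kx [Hz ->]]]]].
    by apply: (GL1_X p_gt1); apply: gH.
  by apply: (GL1_C p_gt1); [apply: gK | apply: gH].
have sub : subs (pcomm K H) H.
  apply: cgen_min => // y [[[x [Hx ->]] | [x [z [Kx [Hz ->]]]]] _].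
    exact: (sg_X sgH).
  by rewrite famC_conj; apply: (sg_M sgH) => //; apply: nH => //; apply: (sg_V sgH).
split => //; last by move=> y Cy; apply: cgen_ext; [right | apply: gensG1; right].
  split; [exact: cgen_sg | exact: cgen_closed | by move=> x /sub /HK |].
  move=> c y Kc; apply: (cgen_normal p_gt1 sgK) => // c' y' Kc'.
  move=> [[x [Hx ->]] | [x [z [Kx [Hz ->]]]]] _.
    by left; exists (conj c' x); split; [apply: nH | rewrite (conjX _ _ (uK _ Kc'))].
  right; exists (conj c' x), (conj c' z); split; first exact: (sg_conj sgK).
  split; first exact: nH.
  by rewrite conjR; [| apply: uK | apply: uK | apply: uH].
by move=> y Py; apply: cgen_ext; [left | apply: gensG1; left].
Qed.

Section Series.
Variable G : fset.
Hypotheses (sgG : subgroup G) (Gcl : pclosed G).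
Local Notation P := (pser G).

Lemma pser_closed_normal j : closed_normal G (P j).
Proof.
elim: j => [|j IH]; last by case: (pcomm_closed_normal sgG IH).
split => //; first by move=> x /Gcl.
by move=> c y; exact: (sg_conj sgG).
Qed.

Lemma pser_sg j : subgroup (P j). Proof. by case: (pser_closed_normal j). Qed.
Lemma pser_closed j : subs (pclosure (P j)) (P j). Proof. by case: (pser_closed_normal j). Qed.
Lemma pser_G j : subs (P j) G. Proof. by case: (pser_closed_normal j). Qed.
Lemma pser_normal j : normal_in (P j) G. Proof. by case: (pser_closed_normal j). Qed.
Lemma pser_nest j : subs (P j.+1) (P j).
Proof. by case: (pcomm_closed_normal sgG (pser_closed_normal j)). Qed.
Lemma pser_pw j : subs (pw (P j)) (P j.+1).
Proof. by case: (pcomm_closed_normal sgG (pser_closed_normal j)). Qed.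
Lemma pser_comm j : subs (comm G (P j)) (P j.+1).
Proof. by case: (pcomm_closed_normal sgG (pser_closed_normal j)). Qed.
Lemma pser_nest_le i j : (i <= j)%N -> subs (P j) (P i).
Proof.
move=> /subnK <-; elim: (j - i)%N => [|d IH] x //.
by rewrite addSn => /pser_nest /IH.
Qed.
End Series.
End PSeries.

Section ElementaryQuotient.
Variables (p m : nat).
Hypothesis p_gt1 : (1 < p)%N.
Local Notation fam := (fam p m).
Local Notation fam1 := (fam1 p m).
Local Notation fset := (fset p m).
Local Notation subgroup := (@subgroup p m).
Local Notation pclosure := (@pclosure p m).
Local Notation cgen := (@cgen p m).
Local Notation subs := (@subs p m).
Local Notation congr := (@congr p m).

Variables (K N : fset).
Hypotheses (sgK : subgroup K) (sgN : subgroup N) (nN : normal_in N K)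
  (pwN : subs (pw K) N) (commN : subs (comm K K) N).

Let uK := sg_U p_gt1 sgK.
Ltac inK := repeat first [assumption | apply: (sg_M sgK) | apply: (sg_X sgK)].

Lemma cg_refl x : K x -> congr N x x.
Proof. by move=> Kx; rewrite /congr (famMVx (uK Kx)); exact: (sg_1 sgN). Qed.

Lemma cg_sym x y : K x -> K y -> congr N x y -> congr N y x.
Proof.
move=> Kx Ky Nxy; rewrite /congr.
have -> : famM (famV x) y = famV (famM (famV y) x).
  by rewrite (famVM (UV (uK Ky)) (uK Kx)) famVK.
exact: (sg_V sgN).
Qed.

Lemma cg_trans x y z : K x -> K y -> K z -> congr N x y -> congr N y z -> congr N x z.
Proof.
move=> Kx Ky Kz Nxy Nyz; rewrite /congr.
have -> : famM (famV z) x = famM (famM (famV z) y) (famM (famV y) x).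
  by rewrite famMA -(famMA y) (famMxV (uK Ky)) famM1x.
exact: (sg_M sgN).
Qed.

Lemma cg_mul x x' y y' : K x -> K x' -> K y -> K y' ->
  congr N x x' -> congr N y y' -> congr N (famM x y) (famM x' y').
Proof.
move=> Kx Kx' Ky Ky' Nxx' Nyy'; rewrite /congr (famVM (uK Kx') (uK Ky')).
have -> : famM (famM (famV y') (famV x')) (famM x y) =
          famM (conj y' (famM (famV x') x)) (famM (famV y') y).
  rewrite /conj !famMA; do 3 congr famM.
  by rewrite -famMA (famMxV (uK Ky')) famM1x.
by apply: (sg_M sgN) => //; apply: nN.
Qed.

Lemma cg_comm x y : K x -> K y -> congr N (famM x y) (famM y x).
Proof.
move=> Kx Ky; rewrite /congr (famVM (uK Ky) (uK Kx)); apply: commN.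
by exists x, y; do !split => //; rewrite /famC famMA.
Qed.

Lemma cg_powmod x a : K x -> congr N (famX x a) (famX x (a %% p)).
Proof.
move=> Kx; rewrite {1}(divn_eq a p) famXD mulnC famXM /congr.
set r := famX x (a %% p); set q := famX (famX x p) (a %/ p).
have Nq : N q by apply: (sg_X sgN); apply: pwN; exists x.
by rewrite -famMA; apply: nN => //; apply: (sg_X sgK).
Qed.

Variables (r : nat) (f : 'I_r -> fam).
Hypothesis Kf : forall i, K (f i).

Definition lc (l : seq 'I_r) (e : 'I_r -> nat) : fam :=
  foldr (@famM p m) fam1 [seq famX (f i) (e i) | i <- l].

Lemma lc_cons i l e : lc (i :: l) e = famM (famX (f i) (e i)) (lc l e).
Proof. by []. Qed.

Lemma lincombE e : lincomb f e = lc (enum 'I_r) e.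
Proof. by []. Qed.

Lemma lc_K l e : K (lc l e).
Proof. by elim: l => [|i l IH]; [exact: (sg_1 sgK) | rewrite lc_cons; inK]. Qed.

Lemma lc_add l e1 e2 :
  congr N (famM (lc l e1) (lc l e2)) (lc l (fun i => e1 i + e2 i)%N).
Proof.
elim: l => [|i l IH]; first by rewrite famM1x; apply: cg_refl; exact: (sg_1 sgK).
rewrite !lc_cons famXD.
set a1 := famX (f i) (e1 i); set a2 := famX (f i) (e2 i).
have Ka1 : K a1 by inK. have Ka2 : K a2 by inK.
move: IH (lc_K l e1) (lc_K l e2) (lc_K l (fun i => e1 i + e2 i)%N).
set P1 := lc l e1; set P2 := lc l e2; set P := lc l _ => IH KP1 KP2 KP.
(* a1 P1 a2 P2 = a1 (P1 a2) P2 = a1 (a2 P1) P2 = (a1 a2)(P1 P2) = (a1 a2) P *)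
have -> : famM (famM a1 P1) (famM a2 P2) = famM a1 (famM (famM P1 a2) P2).
  by rewrite !famMA.
apply: (@cg_trans _ (famM a1 (famM (famM a2 P1) P2))); try by inK.
  apply: cg_mul; try by inK.
  - exact: cg_refl.
  - apply: cg_mul; try by inK.
    + exact: cg_comm.
    + exact: cg_refl.
have -> : famM a1 (famM (famM a2 P1) P2) = famM (famM a1 a2) (famM P1 P2).
  by rewrite !famMA.
apply: cg_mul => //; try by inK.
by apply: cg_refl; inK.
Qed.

Lemma lc_mod l e : congr N (lc l e) (lc l (fun i => e i %% p)%N).
Proof.
elim: l => [|i l IH]; first by apply: cg_refl; exact: (sg_1 sgK).
rewrite !lc_cons; apply: cg_mul => //; try by [apply: lc_K | inK].
exact: cg_powmod.
Qed.

Lemma lc_0 l : lc l (fun _ => 0%N) = fam1.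
Proof. by elim: l => // i l IH; rewrite lc_cons IH famM1x. Qed.

Lemma lc_delta l i : uniq l ->
  lc l (fun j => nat_of_bool (j == i)) = if i \in l then f i else fam1.
Proof.
elim: l => [|j l IH] // /andP [jNl ul]; rewrite lc_cons IH // inE.
case: (eqVneq j i) jNl => [-> | ne] /=; last by rewrite famM1x.
by move/negbTE->; rewrite famX1 famMx1.
Qed.

Definition spanned (y : fam) := K y /\ exists e, congr N y (lincomb f e).

Lemma spanned_M y1 y2 : spanned y1 -> spanned y2 -> spanned (famM y1 y2).
Proof.
move=> [K1 [e1 N1]] [K2 [e2 N2]]; split; first by inK.
exists (fun i => e1 i + e2 i)%N.
rewrite !lincombE; have KL := lc_K (enum 'I_r).
apply: (@cg_trans _ (famM (lc (enum 'I_r) e1) (lc (enum 'I_r) e2))); try by inK.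
- exact: cg_mul.
- exact: lc_add.
Qed.

Lemma spanned_f i : spanned (f i).
Proof.
split => //; exists (fun j => nat_of_bool (j == i)).
by rewrite lincombE lc_delta ?enum_uniq // mem_enum; apply: cg_refl.
Qed.

Lemma spanned_1 : spanned fam1.
Proof.
split; first exact: (sg_1 sgK).
by exists (fun _ => 0%N); rewrite lincombE lc_0; apply: cg_refl; exact: (sg_1 sgK).
Qed.

(* In K/N the inverse of y is y^(p-1). *)
Lemma spanned_V y : spanned y -> spanned (famV y).
Proof.
move=> sy; have Ky := proj1 sy; have uy := uK Ky.
have [KX [e Ne]] : spanned (famX y p.-1).
  by elim: (p.-1) => [|k IH]; [exact: spanned_1 | exact: spanned_M].
split; first exact: (sg_V sgK).
exists e; apply: (@cg_trans _ (famX y p.-1)) => //; try exact: (sg_V sgK).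
  exact: lc_K.
rewrite /congr -(famVM uy (UX _ uy)) -famXS prednK ?(ltnW p_gt1) //.
by apply: (sg_V sgN); apply: pwN; exists y.
Qed.

Lemma spanned_sg : subgroup spanned.
Proof.
split; first by move=> y [Ky _]; exact: (sg_GL1 sgK).
by split; [exact: spanned_1 | split; [exact: spanned_M | exact: spanned_V]].
Qed.

(* Reducing exponents modulo p, spanned is the finite union of the cosets
   of N represented by reduced products. *)
Lemma spanned_cosets y : spanned y <->
  exists phi : {ffun 'I_r -> 'I_p}, coset K N (lincomb f (fun i => phi i)) y.
Proof.
split => [[Ky [e Ne]] | [phi [Ky Ny]]]; last by split => //; exists (fun i => phi i).
have p_gt0 : (0 < p)%N := ltnW p_gt1.
exists [ffun i => Ordinal (ltn_pmod (e i) p_gt0)]; split => //.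
have -> : (fun i => nat_of_ord ([ffun i => Ordinal (ltn_pmod (e i) p_gt0)] i)) =
          (fun i => e i %% p)%N.
  by apply: functional_extensionality => i; rewrite ffunE.
rewrite !lincombE in Ne *.
by apply: (@cg_trans _ (lc (enum 'I_r) e)) => //; [exact: lc_K | exact: lc_K | exact: lc_mod].
Qed.

Hypotheses (Kcl : subs (pclosure K) K) (Ncl : subs (pclosure N) N).

Lemma spanned_closed : subs (pclosure spanned) spanned.
Proof.
move=> x xcl; apply/spanned_cosets.
pose A (phi : {ffun 'I_r -> 'I_p}) := coset K N (lincomb f (fun i => nat_of_ord (phi i))).
apply: (pclosure_fin_union (A := A)).
- by move=> phi y [Ky _]; exact: (sg_GL1 sgK).
- by move=> phi; apply: coset_closed => //; apply: (sg_GL1 sgK); exact: lc_K.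
- by apply: pclosure_mono xcl => y /spanned_cosets.
Qed.

Lemma cgen_span x : cgen (fun y => exists i, y = f i) x ->
  exists phi : {ffun 'I_r -> 'I_p}, congr N x (lincomb f (fun i => phi i)).
Proof.
move=> cx; have /spanned_cosets [phi [_ Nx]] : spanned x.
  by apply: (cgen_min spanned_sg spanned_closed) cx => y [[i ->] _]; exact: spanned_f.
by exists phi.
Qed.

End ElementaryQuotient.

Lemma iter_mul1 (R : pzSemiRingType) n k :
  iter k (fun z : 'M[R]_n => 1%:M *m z) 1%:M = 1%:M.
Proof. by elim: k => //= k ->; rewrite mul1mx. Qed.

(* The congruence subgroups: x is trivial modulo p^t when its levels below t
   are the identity. *)
Section CongruenceSubgroups.
Variables (p m : nat).
Hypothesis p_gt1 : (1 < p)%N.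
Local Notation fam := (fam p m).
Local Notation GL1 := (@GL1 p m).
Local Notation subgroup := (@subgroup p m).
Local Notation pclosure := (@pclosure p m).
Local Notation subs := (@subs p m).

Definition mx_dvd n u (A : 'M['Z_(p ^ n.+1)]_m) :=
  forall i j, (p ^ u %| nat_of_ord (A i j))%N.

Lemma val_Zp_mulrn n (z : 'Z_(p ^ n.+1)) k :
  nat_of_ord (z *+ k) = ((z * k) %% p ^ n.+1)%N.
Proof.
rewrite Zp_mulrn /=; move: (nat_of_ord z * k)%N => w.
by move: (Zp_trunc (p ^ n.+1)) (Zp_cast (pX_gt1 p_gt1 n)) => t ->.
Qed.

Lemma mx_dvd_mulrn n u A k : (u <= n.+1)%N -> mx_dvd u A -> @mx_dvd n u (A *+ k).
Proof.
move=> le_un dA i j; rewrite mulmxnE val_Zp_mulrn /dvdn modn_dvdm ?dvdn_exp2l //.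
exact/dvdn_mulr/dA.
Qed.

Lemma mx_dvd_mul0 n u v (A B : 'M['Z_(p ^ n.+1)]_m) : (n.+1 <= u + v)%N ->
  mx_dvd u A -> mx_dvd v B -> A *m B = 0.
Proof.
move=> le dA dB; apply/matrixP => i j; rewrite !mxE big1 // => l _.
apply: ord_inj; rewrite -[A i l]natr_Zp -[B l j]natr_Zp -natrM val_Zp_nat ?pX_gt1 //.
apply/eqP; rewrite -/(dvdn _ _).
by apply: (dvdn_trans (dvdn_exp2l p le)); rewrite expnD dvdn_mul.
Qed.

Lemma red_ker s (A : 'M['Z_(p ^ s.+2)]_m) : red A = 1%:M -> mx_dvd s.+1 (A - 1%:M).
Proof.
move=> A1 i j; have : map_mx (rZ (p ^ s.+1)) (A - 1%:M) = 0.
  rewrite map_rZB ?pX_gt1 ?pX_dvd // map_rZ1 ?pX_gt1 ?pX_dvd //.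
  by rewrite -[map_mx _ A]/(red A) A1 subrr.
by move/matrixP/(_ i j); rewrite !mxE rZE natr_Zp_eq0 ?pX_gt1.
Qed.

Lemma GL1_ker (a : fam) t : GL1 a -> mx_dvd 1 (a t - 1%:M).
Proof.
move=> [ca a0] i j; have : map_mx (rZ (p ^ 1)) (a t - 1%:M) = 0.
  rewrite map_rZB ?pX_gt1 ?pX_dvd // map_rZ1 ?pX_gt1 ?pX_dvd //.
  by rewrite red_level0 // a0 subrr.
by move/matrixP/(_ i j); rewrite !mxE rZE natr_Zp_eq0 ?pX_gt1.
Qed.

Definition Kt (t : nat) (x : fam) := GL1 x /\ forall i, (i < t)%N -> x i = 1%:M.

Lemma Kt_sg t : subgroup (Kt t).
Proof.
split; first by move=> x [].
split; first by split; [exact: GL1_1 | by []].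
split.
  move=> x y [gx x1] [gy y1]; split; first exact: GL1_M.
  by move=> i lt_it; rewrite /famM x1 // y1 // mulmx1.
move=> x [gx x1]; split; first exact: GL1_V.
by move=> i lt_it; rewrite /famV x1 // invmx1.
Qed.

Lemma Kt_closed t : subs (pclosure (Kt t)) (Kt t).
Proof.
move=> x [gx approx]; split => // i lt_it.
by have [y [[_ y1] <-]] := approx i; apply: y1.
Qed.

(* (1 + D)^p = 1 + p D when D^2 = 0, and p D = 0 when D = 0 mod p^t. *)
Lemma Kt_pow t x : Kt t.+1 x -> Kt t.+2 (famX x p).
Proof.
move=> [gx x1]; split; first exact: GL1_X.
move=> i; rewrite ltnS leq_eqVlt => /orP [/eqP -> | lt_it]; last first.
  by rewrite /famX x1 // iter_mul1.
have [cx _] := gx.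
have dD : mx_dvd t.+1 (x t.+1 - 1%:M) by apply: red_ker; rewrite cx x1.
set D := x t.+1 - 1%:M in dD.
have xD : x t.+1 = 1%:M + D by rewrite /D addrC subrK.
have DD k : D *m (D *+ k) = 0.
  apply: (mx_dvd_mul0 (u := t.+1) (v := t.+1)) => //.
    by rewrite -{1}(addn0 t.+1) ltn_add2l.
  exact: mx_dvd_mulrn.
have powD k : iter k (fun z => x t.+1 *m z) 1%:M = 1%:M + D *+ k.
  elim: k => [|k IH]; first by rewrite /= addr0.
  by rewrite /= IH xD mulmxDl mul1mx mulmxDr mulmx1 DD addr0 mulrSr -addrA.
rewrite /famX powD; suff -> : D *+ p = 0 by rewrite addr0.
apply/matrixP => i0 j0; rewrite mulmxnE [RHS]mxE; apply: ord_inj.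
rewrite val_Zp_mulrn /=; apply/eqP; rewrite -/(dvdn _ _).
by move: (dD i0 j0); move: (nat_of_ord _) => w dw; rewrite expnSr dvdn_mul.
Qed.

(* 1 + E and 1 + D commute when ED = DE = 0. *)
Lemma Kt_comm t a y : GL1 a -> Kt t.+1 y -> Kt t.+2 (famC a y).
Proof.
move=> ga [gy y1]; split; first exact: GL1_C.
have ua := GL1_U p_gt1 ga; have uy := GL1_U p_gt1 gy.
move=> i; rewrite ltnS leq_eqVlt => /orP [/eqP -> | lt_it]; last first.
  by rewrite /famC /famM /famV y1 // invmx1 !mulmx1 mulVmx ?ua.
have [cy _] := gy.
have dD : mx_dvd t.+1 (y t.+1 - 1%:M) by apply: red_ker; rewrite cy y1.
have dE := GL1_ker t.+1 ga.
have ay : a t.+1 *m y t.+1 = y t.+1 *m a t.+1.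
  have ED : (a t.+1 - 1%:M) *m (y t.+1 - 1%:M) = 0 by exact: (mx_dvd_mul0 _ dE dD).
  have DE : (y t.+1 - 1%:M) *m (a t.+1 - 1%:M) = 0.
    by apply: (mx_dvd_mul0 _ dD dE); rewrite addn1.
  move: ED DE; rewrite !mulmxBl !mulmxBr !mulmx1 !mul1mx => /eqP ED /eqP DE.
  move: ED DE; rewrite !subr_eq0 !subr_eq => /eqP -> /eqP ->.
  by rewrite addrC addrA addrAC.
rewrite /famC /famM /famV ay mulmxA -(mulmxA _ (invmx (y t.+1))) mulVmx ?uy //.
by rewrite mulmx1 mulVmx ?ua.
Qed.
End CongruenceSubgroups.

Section FiniteIndex.
Variables (p m : nat).
Hypothesis p_gt1 : (1 < p)%N.
Local Notation fam := (fam p m).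
Local Notation fam1 := (fam1 p m).
Local Notation fset := (fset p m).
Local Notation subgroup := (@subgroup p m).
Local Notation pclosure := (@pclosure p m).
Local Notation subs := (@subs p m).
Local Notation congr := (@congr p m).

Definition fin_index (H N : fset) := exists (I : finType) (c : I -> fam),
  (forall i, H (c i)) /\ forall x, H x -> exists i, congr N x (c i).

Lemma fin_index_trans H N M : subgroup H -> subs N H ->
  fin_index H N -> fin_index N M -> fin_index H M.
Proof.
move=> sgH NH [I [c [Hc repc]]] [J [d [Nd repd]]].
exists (I * J)%type, (fun ij => famM (c ij.1) (d ij.2)); split.
  by move=> [i j]; apply: (sg_M sgH) => //; apply: NH.
move=> x Hx; have [i Nx] := repc x Hx; have [j Mx] := repd _ Nx.
exists (i, j); rewrite /congr /= famVM ?famMA //.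
- exact: (sg_U p_gt1 sgH).
- by apply: (sg_U p_gt1 sgH); apply: NH.
Qed.

Lemma closed_fin_index_open H N :
  subgroup H -> subs (pclosure H) H -> subgroup N -> subs (pclosure N) N ->
  subs N H -> fin_index H N -> open_in N H.
Proof.
move=> sgH Hcl sgN Ncl NH [I [c [Hc repc]]].
apply: NNPP => not_open.
(* the union of the cosets of N other than N itself is closed ... *)
pose A i x := ~ N (c i) /\ coset H N (c i) x.
have Acl i : subs (pclosure (A i)) (A i).
  move=> x xcl; have [_ /(_ 0%N) [_ [[nNc _] _]]] := xcl; split => //.
  apply: coset_closed => //; first exact: (sg_GL1 sgH).
  by apply: pclosure_mono xcl => y [].
(* ... and, as N is not open, it contains 1 in its closure *)
have : pclosure (fun x => exists i, A i x) fam1.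
  split; first exact: GL1_1.
  move=> n; apply: NNPP => no_y; apply: not_open; exists n => x Hx xn.
  apply: NNPP => nNx; apply: no_y; have [i Nci] := repc x Hx.
  exists x; split => //; exists i; split => //.
  move=> Nc; apply: nNx; have uc := sg_U p_gt1 sgH (Hc i).
  by rewrite -[x]famM1x -(famMxV uc) famMA; apply: (sg_M sgN).
move/(pclosure_fin_union (fun i y Ay => sg_GL1 sgH (proj1 (proj2 Ay))) Acl) => [i [nNc [_]]].
by rewrite /congr famMx1 => /(sg_V sgN); rewrite famVK.
Qed.
End FiniteIndex.

Section UniformSeries.
Variables (p m : nat) (G : fset p m).
Hypotheses (p_gt1 : (1 < p)%N) (sgG : subgroup G) (Gcl : pclosed G).
Local Notation fam1 := (fam1 p m).
Local Notation GL1 := (@GL1 p m).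
Local Notation subs := (@subs p m).
Local Notation congr := (@congr p m).
Local Notation fin_index := (@fin_index p m).
Local Notation P := (pser G).

Let sgP := pser_sg p_gt1 sgG Gcl.
Let PG := pser_G p_gt1 sgG Gcl.

Lemma pser_Kt j : subs (P j) (Kt j.+1).
Proof.
elim: j => [|j IH].
  move=> x Gx; have gx := sg_GL1 sgG Gx; split => // i.
  by rewrite ltnS leqn0 => /eqP ->; case: gx.
apply: cgen_min; [exact: Kt_sg | exact: Kt_closed |].
move=> y [[[x [Px ->]] | [a [z [Ga [Pz ->]]]]] _]; first exact/Kt_pow/IH.
by apply: Kt_comm => //; [exact: (sg_GL1 sgG) | exact: IH].
Qed.

Lemma pser_trivial x : (forall j, P j x) -> x = fam1.
Proof.
move=> Px; apply: functional_extensionality_dep => j.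
by have [_ ->] := pser_Kt (Px j).
Qed.

(* G/G_2 is finite: G is topologically generated by finitely many elements,
   which we may assume to lie in GL_m^1, and G/G_2 is elementary abelian. *)
Lemma pser_fin_index0 : topfingen G -> fin_index (P 0) (P 1).
Proof.
move=> [r [f Gf]].
pose f' i := if excluded_middle_informative (GL1 (f i)) then f i else fam1.
have Gf' i : G (f' i).
  rewrite /f'; case: excluded_middle_informative => gfi; last exact: (sg_1 sgG).
  by apply/Gf; apply: cgen_ext => //; exists i.
have G_gen : subs G (cgen (fun x => exists i, x = f' i)).
  move=> z /Gf; apply: cgen_min; [exact: cgen_sg | exact: cgen_closed |].
  move=> y [[i ->] gfi]; apply: cgen_ext => //; exists i.
  by rewrite /f'; case: excluded_middle_informative.
exists {ffun 'I_r -> 'I_p}, (fun phi : {ffun 'I_r -> 'I_p} => lincomb f' (fun i => phi i)).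
split.
  by move=> phi; rewrite lincombE; exact: (lc_K sgG).
have Gcl' : subs (pclosure G) G by move=> x /Gcl.
move=> z Gz; have [phi ?] := cgen_span p_gt1 sgG (sgP 1)
  (pser_normal p_gt1 sgG Gcl (j := 1)) (pser_pw p_gt1 sgG Gcl (j := 0))
  (pser_comm p_gt1 sgG Gcl (j := 0)) Gf' Gcl' (pser_closed p_gt1 sgG Gcl (j := 1))
  (G_gen z Gz).
by exists phi.
Qed.

(* The p-th power map carries representatives of G_j/G_(j+1) onto
   representatives of G_(j+1)/G_(j+2). *)
Lemma pser_fin_index_step j : ppow_iso G j.+1 ->
  fin_index (P j) (P j.+1) -> fin_index (P j.+1) (P j.+2).
Proof.
move=> [pw_in [pw_wd [_ [_ pw_onto]]]] [I [d [Pd repd]]].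
exists I, (fun i => famX (d i) p); split; first by move=> i; apply: pw_in.
move=> z Pz; have [x [Px Nxz]] := pw_onto z Pz; have [i Nxd] := repd x Px.
exists i; have Gz := PG Pz; have Gx := PG Px; have Gd := PG (Pd i).
have GX y : G y -> G (famX y p) by exact: sg_X.
apply: (cg_trans p_gt1 sgG (sgP j.+2) Gz (GX _ Gx) (GX _ Gd)).
- by apply: (cg_sym p_gt1 sgG (sgP j.+2)) => //; exact: GX.
- exact: pw_wd.
Qed.

Lemma pser_fin_index j : topfingen G -> (forall n, (1 <= n)%N -> ppow_iso G n) ->
  fin_index G (P j).
Proof.
move=> tfg iso.
have step_index i : fin_index (P i) (P i.+1).
  elim: i => [|i IH]; first exact: pser_fin_index0.
  by apply: pser_fin_index_step => //; apply: iso.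
elim: j => [|j IH].
  exists unit, (fun=> fam1); split=> [_|x Gx]; first exact: (sg_1 sgG).
  by exists tt; rewrite /congr famV1 famM1x.
exact: (fin_index_trans p_gt1 sgG (@PG j)).
Qed.

Lemma pser_open j : uniform G -> open_in (P j) G.
Proof.
move=> [tfg [_ iso]]; apply: (closed_fin_index_open p_gt1) => //.
- by move=> x /Gcl.
- exact: pser_closed.
- exact: pser_fin_index.
Qed.
End UniformSeries.

Section Traces.
Variables (p m : nat) (G H : fset p m).
Hypotheses (p_gt1 : (1 < p)%N) (sgG : subgroup G) (Gcl : pclosed G).
Hypotheses (sgH : subgroup H) (HG : subs H G).
Local Notation P := (pser G).

Lemma trace_series j :
  normal_in (fsetI H (P j)) H /\
  subs (fsetI H (P j.+1)) (fsetI H (P j)) /\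
  (forall x, fsetI H (P j) x -> fsetI H (P j.+1) (famX x p)) /\
  (forall x y, fsetI H (P j) x -> fsetI H (P j) y -> fsetI H (P j.+1) (famC x y)) /\
  (forall x y, H x -> fsetI H (P j) y ->
     congr (fsetI H (P j.+1)) (famM (famM (famV x) y) x) y).
Proof.
split.
  move=> c y Hc [Hy Py]; split; first exact: (sg_conj sgH).
  by apply: (pser_normal p_gt1 sgG Gcl) => //; apply: HG.
split; first by move=> y [Hy Py]; split => //; apply: (pser_nest p_gt1 sgG Gcl).
split.
  move=> x [Hx Px]; split; first exact: (sg_X sgH).
  by apply: (pser_pw p_gt1 sgG Gcl); exists x.
split.
  move=> x y [Hx Px] [Hy Py]; split; first exact: (sg_C sgH).
  by apply: (pser_comm p_gt1 sgG Gcl); exists x, y; split => //; apply: HG.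
(* y^-1 (x^-1 y x) is the inverse of the commutator [x, y] *)
move=> x y Hx [Hy Py]; have uH := sg_U p_gt1 sgH.
rewrite /congr -[famM _ (famM _ x)]/(famM (famV y) (conj x y)).
have -> : famM (famV y) (conj x y) = famV (famC x y).
  by rewrite (famVC (uH _ Hx) (uH _ Hy)) /famC /conj !famMA.
split; first by apply: (sg_V sgH); apply: (sg_C sgH).
apply: (sg_V (pser_sg p_gt1 sgG Gcl _)); apply: (pser_comm p_gt1 sgG Gcl).
by exists x, y; split => //; apply: HG.
Qed.
End Traces.

Section GeneratedSubgroup.
Variables (p m : nat) (G : fset p m).
Hypotheses (p_gt1 : (1 < p)%N) (sgG : subgroup G) (Gcl : pclosed G).
Variables (k s : nat) (g : 'I_s -> fam p m).
Hypothesis gk : forall i, pser G k (g i).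
Local Notation P := (pser G).
Local Notation G' := (cgen (fun x => exists i, x = g i)).

Let sgG' : subgroup G' := cgen_sg p_gt1 _.

Lemma G'_gen i : G' (g i).
Proof. by apply: cgen_ext; [exists i | exact/(sg_GL1 sgG)/(pser_G p_gt1 sgG Gcl)]. Qed.

Lemma G'_sub_pser : subs G' (P k).
Proof.
apply: cgen_min; [exact: pser_sg | exact: pser_closed |].
by move=> y [[i ->] _]; apply: gk.
Qed.

Let G'G : subs G' G := fun x G'x => pser_G p_gt1 sgG Gcl (G'_sub_pser G'x).

Lemma Phi_closed_normal :
  [/\ closed_normal G' (Phi G'), subs (Phi G') G',
      subs (pw G') (Phi G') & subs (comm G' G') (Phi G')].
Proof.
apply: (pcomm_closed_normal p_gt1 sgG').
by split => //; [exact: cgen_closed | move=> c y; exact: (sg_conj sgG')].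
Qed.

Lemma Phi_sub_pser : subs (Phi G') (P k.+1).
Proof.
apply: cgen_min; [exact: pser_sg | exact: pser_closed |].
move=> y [[[x [G'x ->]] | [x [z [G'x [G'z ->]]]]] _].
  by apply: (pser_pw p_gt1 sgG Gcl); exists x; split => //; apply: G'_sub_pser.
apply: (pser_comm p_gt1 sgG Gcl); exists x, z.
by split; [apply: G'G | split => //; apply: G'_sub_pser].
Qed.

Lemma G'_span x : G' x ->
  exists phi : {ffun 'I_s -> 'I_p}, congr (Phi G') x (lincomb g (fun i => phi i)).
Proof.
have [[sgPhi Phicl _ nPhi] _ pwPhi commPhi] := Phi_closed_normal.
exact: (cgen_span p_gt1 sgG' sgPhi nPhi pwPhi commPhi G'_gen (@cgen_closed _ _ _) Phicl).
Qed.

Hypothesis li : lin_indep (P k) (P k.+1) g.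

Lemma G'_dp : dp_eq G' s.
Proof.
exists g; split; first exact: G'_gen.
split; first by move=> e lt_ep /Phi_sub_pser; apply: li.
by move=> x /G'_span [phi ?]; exists (fun i => phi i).
Qed.

(* G'^p[G',G'] = G' /\ G_(k+1): an element of the right-hand side is
   congruent modulo G'^p[G',G'] to a reduced product of the g_i lying in
   G_(k+1), whose exponents must vanish by linear independence. *)
Lemma G'_Phi : seteq (fsetI G' (P k.+1)) (Phi G').
Proof.
have [[sgPhi _ PhiG' _] _ _ _] := Phi_closed_normal.
move=> x; split => [[G'x Px] | Phix]; last first.
  by split; [apply: PhiG' | apply: Phi_sub_pser].
have [phi Nx] := G'_span G'x; set L := lincomb g _ in Nx.
have uG' := sg_U p_gt1 sgG'.
have G'L : G' L by rewrite /L lincombE; apply: lc_K => //; exact: G'_gen.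
have PL : P k.+1 L.
  have -> : L = famM x (famV (famM (famV L) x)).
    rewrite (famVM (UV (uG' _ G'L)) (uG' _ G'x)) famVK -famMA.
    by rewrite (famMxV (uG' _ G'x)) famM1x.
  apply: (sg_M (pser_sg p_gt1 sgG Gcl _)) => //.
  by apply: (sg_V (pser_sg p_gt1 sgG Gcl _)); exact: Phi_sub_pser.
have phi0 := li (fun i => ltn_ord (phi i)) PL.
have L1 : L = fam1 p m.
  rewrite /L lincombE; have -> : (fun i => nat_of_ord (phi i)) = fun=> 0%N.
    by apply: functional_extensionality => i; exact: phi0.
  exact: lc_0.
by move: Nx; rewrite L1 /congr famV1 famM1x.
Qed.
End GeneratedSubgroup.

Local Close Scope ring_scope.

Theorem mainTheorem6 (p m : nat) (G : fset p m) (k s : nat) (g : 'I_s -> fam p m) :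
  prime p -> odd p ->
  subgroup G -> pclosed G -> uniform G ->
  (1 <= k)%N ->
  (forall i, Gn G k (g i)) ->
  lin_indep (Gn G k) (Gn G k.+1) g ->
  let G' := cgen (fun x => exists i, x = g i) in
  let Gb := fun n => fsetI G' (Gn G (n + k - 1)) in
  (* (i) *)
  (dp_eq G' s /\ seteq (Gb 2%N) (Phi G')) /\
  (* (ii) *)
  (forall n, (1 <= n)%N ->
     normal_in (Gb n) G' /\
     subs (Gb n.+1) (Gb n) /\
     (forall x, Gb n x -> Gb n.+1 (famX x p)) /\
     (forall x y, Gb n x -> Gb n y -> Gb n.+1 (famC x y)) /\
     (forall x y, G' x -> Gb n y -> congr (Gb n.+1) (famM (famM (famV x) y) x) y)) /\
  (* (iii) *)
  (forall n, (1 <= n)%N -> open_in (Gb n) G') /\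
  (forall x, (forall n, (1 <= n)%N -> Gb n x) -> x = fam1 p m).
Proof.
move=> /prime_gt1 p_gt1 _ sgG Gcl uG; case: k => // k _ gk li G' Gb.
(* with k >= 1, G'_[n+1] is the trace of G_(n+k+1) = pser G (n + k) *)
have Gb_pser n : Gb n.+1 = fsetI G' (pser G (n + k)).
  by rewrite /Gb /Gn addSn subSS subn0 addnS.
have G'G : subs G' G.
  by move=> x /(G'_sub_pser p_gt1 sgG Gcl gk); apply: pser_G.
split; [split | split; [|split]].
- exact: (G'_dp p_gt1 sgG Gcl gk li).
- by rewrite Gb_pser add1n; exact: (G'_Phi p_gt1 sgG Gcl gk li).
- case=> // n _; rewrite !Gb_pser addSn.
  by apply: trace_series => //; exact: cgen_sg.
- case=> // n _; rewrite Gb_pser.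
  have [N openN] := pser_open p_gt1 sgG Gcl (n + k) uG.
  by exists N => x G'x xN; split => //; apply: openN => //; apply: G'G.
- move=> x Gbx; apply: (pser_trivial p_gt1 sgG) => j.
  have := Gbx j.+1 isT; rewrite Gb_pser => -[_].
  by apply: (pser_nest_le p_gt1 sgG Gcl); exact: leq_addr.
Qed.
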